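(* Let $M := \langle X \mid R\rangle$, and suppose that the set $Y := \{x\in X \mid \exists\, a,b,c\in\langle X\rangle \text{ such that } (axb,c)\in R \text{ or } (c,axb)\in R\}$ is finite. Then the following are equivalent: (1) There exists $a\in\langle X\rangle$ such that $\mathsf{Z}_M(a)$ is infinite. (2) There exists $a\in\langle X\rangle$ such that $\mathsf{L}_M(a)$ is infinite. (3) There exists $k\in\mathbb{N}$ such that $\mathcal{U}_k(M)$ is infinite (equivalently $\rho_k(M)=\infty$). (4) There exists $k\in\mathbb{N}$ such that $\mathcal{U}_n(M)$ is infinite (equivalently $\rho_n(M)=\infty$) for all $n\ge k$.
   Context: For a set $X$, $\langle X\rangle$ is the free monoid on $X$ (identity $1$); $M=\langle X\mid R\rangle$ is the monoid presented by generators $X$ and relations $R\subseteq\langle X\rangle\times\langle X\rangle$. $|a|$ is word length; $a=_M b$ means equal images in $M$. $\mathsf{Z}_M(a) := \{b\in\langle X\rangle : b=_M a\}$, $\mathsf{L}_M(a) := \{|b| : b\in\mathsf{Z}_M(a)\}$, $\mathcal{L}(M):=\{\mathsf{L}_M(a): a\in\langle X\rangle\}$. For $k\in\mathbb{N}$, $\mathcal{U}_k(M) := \bigcup\{L\in\mathcal{L}(M) : k\in L\}$ and, when nonempty, $\rho_k(M) := \sup\mathcal{U}_k(M)\in\mathbb{N}\cup\{\infty\}$. *)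

(* Words in the free monoid <X> are lists over X (identity = nil,
   product = ++). A presentation <X | R> is given by a relation R on words
   (R u v  means (u,v) ∈ R). *)
From Stdlib Require Import List Arith.
Import ListNotations.

Set Implicit Arguments.

Inductive mcong (X : Type) (R : list X -> list X -> Prop) : list X -> list X -> Prop :=
| mcong_refl : forall a, mcong R a a
| mcong_sym : forall a b, mcong R a b -> mcong R b a
| mcong_trans : forall a b c, mcong R a b -> mcong R b c -> mcong R a c
| mcong_step : forall p q u v, R u v -> mcong R (p ++ u ++ q) (p ++ v ++ q).

Definition finite_set (T : Type) (P : T -> Prop) : Prop :=
  exists s : list T, forall x, P x -> In x s.

Definition rel_letters (X : Type) (R : list X -> list X -> Prop) (x : X) : Prop :=
  exists a b c, R (a ++ x :: b) c \/ R c (a ++ x :: b).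

Definition Zset (X : Type) (R : list X -> list X -> Prop) (a : list X) : list X -> Prop :=
  fun b => mcong R b a.

Definition Lset (X : Type) (R : list X -> list X -> Prop) (a : list X) : nat -> Prop :=
  fun n => exists b, Zset R a b /\ length b = n.

Definition Uset (X : Type) (R : list X -> list X -> Prop) (k : nat) : nat -> Prop :=
  fun n => exists a, Lset R a k /\ Lset R a n.

(* A congruence step only rewrites inside relators, so every letter of a word
   congruent to a either occurs in a or lies in the finite set Y. Hence a
   finite length set L(a) forces a finite factorization set Z(a), and
   conversely. If all length sets are finite, then so is every U_k: collapse
   every letter outside Y to one fixed letter; this monoid endomorphism
   preserves congruence and lengths and maps every word of length k onto one of
   finitely many words over Y plus that letter, so U_k is a finite union of
   finite length sets. Finally, right multiplication by a word of length d
   shifts L(a) into U_(|a| + d), which propagates infinitude to all larger k. *)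

From Stdlib Require Import List Arith Lia Classical ClassicalEpsilon.
Import ListNotations.

Set Implicit Arguments.

Lemma finite_set_incl (T : Type) (Q P : T -> Prop) :
  (forall x, P x -> Q x) -> finite_set Q -> finite_set P.
Proof. intros HPQ [s Hs]; exists s; auto. Qed.

Lemma finite_set_image (T U : Type) (f : T -> U) (P : T -> Prop) :
  finite_set P -> finite_set (fun y => exists x, P x /\ f x = y).
Proof.
  intros [s Hs]; exists (map f s); intros y [x [Hx <-]].
  now apply in_map, Hs.
Qed.

Lemma finite_set_bounded (P : nat -> Prop) :
  finite_set P -> exists N, forall n, P n -> n <= N.
Proof.
  intros [s Hs]; exists (list_max s); intros n Hn.
  assert (Hmax : Forall (fun k => k <= list_max s) s) by now apply list_max_le.
  rewrite Forall_forall in Hmax; auto.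
Qed.

Lemma finite_set_bigcup (I T : Type) (J : I -> Prop) (P : I -> T -> Prop) :
  finite_set J -> (forall i, J i -> finite_set (P i)) ->
  finite_set (fun x => exists i, J i /\ P i x).
Proof.
  intros [s Hs] HP.
  assert (Hcover : forall l, finite_set (fun x => exists i, In i l /\ J i /\ P i x)).
  { induction l as [|i l [t Ht]].
    - exists []; intros x [i [[] _]].
    - destruct (classic (J i)) as [Hi|Hi].
      + destruct (HP i Hi) as [u Hu]; exists (u ++ t).
        intros x [j [[<-|Hj] HjP]]; apply in_app_iff; [left|right]; firstorder.
      + exists t; intros x [j [[<-|Hj] HjP]]; [tauto|eauto]. }
  destruct (Hcover s) as [t Ht]; exists t.
  intros x [i [Hi Hx]]; apply Ht; eauto.
Qed.

Lemma finite_set_words (X : Type) (A : list X) (N : nat) :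
  finite_set (fun w => (forall x, In x w -> In x A) /\ length w <= N).
Proof.
  induction N as [|N [s Hs]].
  - exists [[]]; intros [|x w] [_ Hw]; simpl in *; [auto|lia].
  - exists ([] :: flat_map (fun x => map (cons x) s) A).
    intros [|x w] [HA Hw]; [now left|right].
    apply in_flat_map; exists x; split; [apply HA; now left|].
    apply in_map, Hs; split; [intros y Hy; apply HA; now right|simpl in Hw; lia].
Qed.

Section Presentation.
Variables (X : Type) (R : list X -> list X -> Prop).

Lemma mcong_app_r a b t : mcong R a b -> mcong R (a ++ t) (b ++ t).
Proof.
  induction 1.
  - apply mcong_refl.
  - now apply mcong_sym.
  - eapply mcong_trans; eauto.
  - rewrite <- !app_assoc; now apply mcong_step.
Qed.

Lemma rel_letters_relator u v : R u v ->
  (forall x, In x u -> rel_letters R x) /\ (forall x, In x v -> rel_letters R x).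
Proof.
  intros Huv; split; intros x Hx; destruct (in_split _ _ Hx) as [a [b ->]].
  - exists a, b, v; now left.
  - exists a, b, u; now right.
Qed.

Lemma mcong_letters a b : mcong R a b ->
  forall x, In x a -> rel_letters R x \/ In x b.
Proof.
  intros Hab.
  enough (Hboth : (forall x, In x a -> rel_letters R x \/ In x b) /\
                  (forall x, In x b -> rel_letters R x \/ In x a)) by apply Hboth.
  induction Hab as [a|a b _ IH|a b c _ IHab _ IHbc|p q u v Huv].
  - auto.
  - tauto.
  - split; intros x Hx.
    + destruct (proj1 IHab x Hx); auto; apply IHbc; auto.
    + destruct (proj2 IHbc x Hx); auto; apply IHab; auto.
  - destruct (rel_letters_relator Huv) as [Hu Hv].
    split; intros x Hx; rewrite !in_app_iff in *; intuition.
Qed.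

Lemma mcong_map (f : X -> X) : (forall x, rel_letters R x -> f x = x) ->
  forall a b, mcong R a b -> mcong R (map f a) (map f b).
Proof.
  intros Hf a b Hab; induction Hab as [| | |p q u v Huv].
  - apply mcong_refl.
  - now apply mcong_sym.
  - eapply mcong_trans; eauto.
  - assert (Hfix : forall w, (forall x, In x w -> rel_letters R x) -> map f w = w).
    { intros w Hw; rewrite <- (map_id w) at 2; apply map_ext_in; auto. }
    destruct (rel_letters_relator Huv) as [Hu Hv].
    rewrite !map_app, (Hfix u Hu), (Hfix v Hv); now apply mcong_step.
Qed.

Lemma Lset_app a m t : Lset R a m -> Lset R (a ++ t) (m + length t).
Proof.
  intros [b [Hb <-]]; exists (b ++ t); split.
  - now apply mcong_app_r.
  - apply length_app.
Qed.

Lemma Lset_sub_Uset a m : Lset R a m -> Uset R (length a) m.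
Proof. intros Ha; exists a; split; auto; exists a; split; auto; apply mcong_refl. Qed.

Lemma Lset_finite_of_Zset_finite a : finite_set (Zset R a) -> finite_set (Lset R a).
Proof. apply finite_set_image. Qed.

Lemma Lset_infinite_Uset_infinite a : ~ finite_set (Lset R a) ->
  forall n, length a <= n -> ~ finite_set (Uset R n).
Proof.
  intros HL n Hn HU.
  assert (Hlong : exists b, Zset R a b /\ length b <> 0).
  { apply NNPP; intros Hno; apply HL; exists [0]; intros m [b [Hb <-]].
    destruct (Nat.eq_dec (length b) 0) as [->|Hb0]; [now left|firstorder]. }
  destruct Hlong as [[|x0 b] [_ Hb0]]; [easy|].
  set (t := repeat x0 (n - length a)).
  assert (Hat : length (a ++ t) = n) by (unfold t; rewrite length_app, repeat_length; lia).
  apply HL, (finite_set_incl (Q := fun m => exists j, Uset R n j /\ j - length t = m)).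
  - intros m Hm; exists (m + length t); split; [|lia].
    rewrite <- Hat; apply Lset_sub_Uset, Lset_app, Hm.
  - now apply finite_set_image.
Qed.

Hypothesis hY : finite_set (rel_letters R).

Lemma Zset_finite_of_Lset_finite a : finite_set (Lset R a) -> finite_set (Zset R a).
Proof.
  intros HL; destruct (finite_set_bounded HL) as [N HN], hY as [Y HYs].
  apply (finite_set_incl (Q := fun w => (forall x, In x w -> In x (Y ++ a)) /\ length w <= N)).
  - intros b Hb; split.
    + intros x Hx; apply in_app_iff; destruct (mcong_letters Hb x Hx); auto.
    + apply HN; now exists b.
  - apply finite_set_words.
Qed.

Lemma finite_retraction_onto_rel_letters : exists (f : X -> X) (A : list X),
  (forall x, rel_letters R x -> f x = x) /\ (forall x, In (f x) A).
Proof.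
  destruct hY as [Y HYs].
  destruct (classic (exists z, ~ rel_letters R z)) as [[z Hz]|Hall].
  - exists (fun x => if excluded_middle_informative (rel_letters R x) then x else z).
    exists (z :: Y); split; intros x; destruct (excluded_middle_informative _);
      simpl; tauto || auto.
  - exists (fun x => x), Y; split; auto.
    intros x; apply HYs, NNPP; intros Hx; eauto.
Qed.

Lemma Uset_finite : (forall a, finite_set (Lset R a)) -> forall k, finite_set (Uset R k).
Proof.
  intros HL k; destruct finite_retraction_onto_rel_letters as [f [A [Hf HA]]].
  apply (finite_set_incl
    (Q := fun n => exists w, ((forall x, In x w -> In x A) /\ length w <= k) /\ Lset R w n)).
  - intros n [a [[b [Hb Hbk]] [c [Hc Hcn]]]]; exists (map f b); split.
    + split; [|now rewrite length_map, Hbk].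
      intros x Hx; apply in_map_iff in Hx as [y [<- _]]; apply HA.
    + exists (map f c); split; [|now rewrite length_map].
      apply mcong_map; auto; eapply mcong_trans; [exact Hc|now apply mcong_sym].
  - apply finite_set_bigcup; [apply finite_set_words|auto].
Qed.

End Presentation.

Theorem proposition4p4 (X : Type) (R : list X -> list X -> Prop)
  (hY : finite_set (rel_letters R)) :
  let c1 := exists a : list X, ~ finite_set (Zset R a) in
  let c2 := exists a : list X, ~ finite_set (Lset R a) in
  let c3 := exists k : nat, ~ finite_set (Uset R k) in
  let c4 := exists k : nat, forall n : nat, k <= n -> ~ finite_set (Uset R n) in
  (c1 <-> c2) /\ (c2 <-> c3) /\ (c3 <-> c4).
Proof.
  intros c1 c2 c3 c4.
  assert (c3_c2 : c3 -> c2).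
  { intros [k Hk]; apply NNPP; intros Hno; apply Hk, (Uset_finite hY).
    intros a; apply NNPP; intros Ha; apply Hno; now exists a. }
  assert (c2_c4 : c2 -> c4).
  { intros [a Ha]; exists (length a); exact (Lset_infinite_Uset_infinite Ha). }
  assert (c4_c3 : c4 -> c3).
  { intros [k Hk]; exists k; now apply Hk. }
  split; [|split]; split; auto.
  - intros [a Ha]; exists a; contradict Ha; now apply (Zset_finite_of_Lset_finite hY).
  - intros [a Ha]; exists a; contradict Ha; now apply Lset_finite_of_Zset_finite.
Qed.
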